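(* Let $X$ be a real Hilbert space and let $G$ be a closed convex subset of $X$. Suppose there exist $\epsilon,K>0$ such that $\epsilon B_X\subset G\subset K B_X$. If $u,w\in\partial G$ and $\cos(u,w)=\theta>0$, then $$\|u-w\|^2\le K^2\Bigl(\frac{K^2}{\epsilon^2}+1\Bigr)\frac{1-\theta^2}{\theta^2}.$$
   Context: $B_X$ is the closed unit ball of $X$, $\partial G$ the boundary of $G$, and for nonzero $u,w\in X$, $\cos(u,w)=\frac{\langle u,w\rangle}{\|u\|\|w\|}$. *)

From HB Require Import structures.
From mathcomp Require Import all_boot all_order all_algebra.
From mathcomp Require Import all_classical all_reals all_analysis.
Set Implicit Arguments. Unset Strict Implicit. Unset Printing Implicit Defensive.
Import Order.TTheory GRing.Theory Num.Theory.
Import numFieldNormedType.Exports.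
Local Open Scope classical_set_scope.
Local Open Scope ring_scope.

Record hilbert_inner (R : realType) (V : completeNormedModType R) := HilbertInner {
  inner : V -> V -> R;
  inner_sym : forall x y, inner x y = inner y x;
  inner_linl : forall (a : R) (x y z : V), inner (a *: x + y) z = a * inner x z + inner y z;
  inner_norm : forall x, `|x| ^+ 2 = inner x x
}.

Definition cosv (R : realType) (V : completeNormedModType R) (ip : hilbert_inner V)
  (u w : V) : R := inner ip u w / (`|u| * `|w|).

Definition boundary (T : topologicalType) (A : set T) : set T :=
  closure A `\` interior A.

Definition rball (R : realType) (V : completeNormedModType R) (r : R) : set V :=
  [set x | `|x| <= r].

(* Assume |u| <= |w| and project u onto the line through w: the foot is l w with
   l = theta |u| / |w| in [0, 1], and |u - l w|^2 = |u|^2 (1 - theta^2).  By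
   convexity G contains the ball of radius (1 - l) eps around l w, so the boundary
   point u satisfies (1 - l) eps <= |u - l w|.  Hence the component of u - w along
   w, of length (1 - l) |w|, is at most |u| |w| sqrt(1 - theta^2) / eps, and
   Pythagoras together with |u|, |w| <= K gives the bound. *)

From HB Require Import structures.
From mathcomp Require Import all_boot all_order all_algebra.
From mathcomp Require Import all_classical all_reals all_analysis.
From mathcomp Require Import ring lra.
Set Implicit Arguments.
Unset Strict Implicit.
Unset Printing Implicit Defensive.

Import Order.TTheory GRing.Theory Num.Theory.
Import numFieldNormedType.Exports.
Local Open Scope classical_set_scope.
Local Open Scope ring_scope.
Local Open Scope convex_scope.

Lemma law_of_cosines_bound (R : realFieldType) (a b t e K : R) :
  0 < a -> a <= b -> b <= K -> 0 < e -> 0 < t -> t <= 1 ->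
  (1 - t * a / b) ^+ 2 * e ^+ 2 <= a ^+ 2 * (1 - t ^+ 2) ->
  a ^+ 2 - 2 * (t * a * b) + b ^+ 2 <= K ^+ 2 * (K ^+ 2 / e ^+ 2 + 1) * ((1 - t ^+ 2) / t ^+ 2).
Proof.
move=> a0 ab bK e0 t0 t1 proj_ge.
have b0 : 0 < b by lra.
have e20 : 0 < e ^+ 2 by rewrite exprn_gt0.
have t20 : 0 < t ^+ 2 by rewrite exprn_gt0.
set s := 1 - t ^+ 2 in proj_ge *; set m := (1 - t * a / b) ^+ 2 in proj_ge.
have s0 : 0 <= s by rewrite subr_ge0 expr_le1 // ltW.
(* Pythagoras in the right triangle formed by two vectors of norms [a], [b] and
   the foot of the first on the line through the second. *)
have -> : a ^+ 2 - 2 * (t * a * b) + b ^+ 2 = a ^+ 2 * s + m * b ^+ 2.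
  by rewrite /s /m; field; rewrite gt_eqF.
have a2K : a ^+ 2 <= K ^+ 2 by rewrite lerXn2r ?nnegrE; lra.
have b2K : b ^+ 2 <= K ^+ 2 by rewrite lerXn2r ?nnegrE; lra.
have m_le : m <= K ^+ 2 * s / e ^+ 2.
  rewrite ler_pdivlMr //; apply: le_trans proj_ge _; exact: ler_wpM2r.
have mb_le : m * b ^+ 2 <= K ^+ 2 * s / e ^+ 2 * K ^+ 2.
  by apply: ler_pM; rewrite ?sqr_ge0.
have -> : K ^+ 2 * (K ^+ 2 / e ^+ 2 + 1) * (s / t ^+ 2)
          = (K ^+ 2 * s / e ^+ 2 * K ^+ 2 + K ^+ 2 * s) / t ^+ 2.
  by field; rewrite !gt_eqF.
rewrite ler_pdivlMr //; apply: le_trans (ler_piMr _ _) _.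
- by apply: addr_ge0; apply: mulr_ge0 => //; exact: sqr_ge0.
- exact: exprn_ile1 (ltW t0) t1.
- by rewrite addrC lerD // ler_wpM2r.
Qed.

Section inner_product.
Variables (R : realType) (V : completeNormedModType R) (ip : hilbert_inner V).

Lemma inner_linr (a : R) (x y z : V) :
  inner ip x (a *: y + z) = a * inner ip x y + inner ip x z.
Proof. by rewrite inner_sym inner_linl (inner_sym ip y) (inner_sym ip z). Qed.

Lemma normB_scale_sqr (x y : V) (l : R) :
  `|x - l *: y| ^+ 2 = `|x| ^+ 2 - 2 * l * inner ip x y + l ^+ 2 * `|y| ^+ 2.
Proof.
rewrite -scaleNr addrC !(inner_norm ip) inner_linl !inner_linr (inner_sym ip y x).
ring.
Qed.

Lemma cosvC (u w : V) : cosv ip u w = cosv ip w u.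
Proof. by rewrite /cosv (inner_sym ip u w) (mulrC `|u|). Qed.

Lemma cosv_gt0_norml (u w : V) : 0 < cosv ip u w -> 0 < `|u|.
Proof.
move=> cos_gt0; rewrite normr_gt0; apply: contraTneq cos_gt0 => ->.
by rewrite /cosv normr0 mul0r invr0 mulr0 ltxx.
Qed.

Lemma inner_cosv (u w : V) : 0 < `|u| -> 0 < `|w| ->
  inner ip u w = cosv ip u w * `|u| * `|w|.
Proof. by move=> u0 w0; rewrite /cosv; field; rewrite !gt_eqF. Qed.

Lemma normB_proj_sqr (u w : V) : 0 < `|u| -> 0 < `|w| ->
  `|u - (cosv ip u w * `|u| / `|w|) *: w| ^+ 2 = `|u| ^+ 2 * (1 - cosv ip u w ^+ 2).
Proof.
by move=> u0 w0; rewrite normB_scale_sqr inner_cosv //; field; rewrite gt_eqF.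
Qed.

Lemma sqr_cosv_le1 (u w : V) : 0 < `|u| -> 0 < `|w| -> cosv ip u w ^+ 2 <= 1.
Proof.
move=> u0 w0; rewrite -subr_ge0 -(pmulr_rge0 _ (exprn_gt0 2 u0)).
by rewrite -normB_proj_sqr // sqr_ge0.
Qed.

End inner_product.

Section convex_body.
Variables (R : realFieldType) (V : normedModType R).
Variables (G : set V) (eps : R).
Hypotheses (convexG : convex_set (G : set (convex_lmodType V)))
  (ballG : forall x : V, `|x| <= eps -> G x).

Lemma homothetic_ball_sub (w y : V) (l : R) : G w -> 0 <= l -> l < 1 ->
  `|y - l *: w| <= (1 - l) * eps -> G y.
Proof.
move=> Gw l0 l1 yl.
have subl_gt0 : 0 < 1 - l by rewrite subr_gt0.
pose z := (1 - l)^-1 *: (y - l *: w).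
have Gz : G z.
  apply: ballG; rewrite normrZ gtr0_norm ?invr_gt0 //.
  by rewrite mulrC ler_pdivrMr // mulrC.
have := @convexG w z (Itv01 l0 (ltW l1)) (mem_set Gw) (mem_set Gz); rewrite inE.
suff -> : ((w : convex_lmodType V) <| Itv01 l0 (ltW l1) |> (z : convex_lmodType V)) = y :> V by [].
change (l *: w + (1 - l) *: ((1 - l)^-1 *: (y - l *: w)) = y).
by rewrite scalerA divff ?gt_eqF // scale1r addrC subrK.
Qed.

Lemma not_interior_dist_ge (u w : V) (l : R) : G w -> 0 <= l -> l <= 1 ->
  ~ interior G u -> (1 - l) * eps <= `|u - l *: w|.
Proof.
move=> Gw l0; rewrite le_eqVlt => /predU1P[->|l1] nu.
  by rewrite subrr mul0r.
rewrite leNgt; apply/negP => ul; apply: nu; apply/nbhs_ballP.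
exists ((1 - l) * eps - `|u - l *: w|); first by rewrite /= subr_gt0.
move=> y; rewrite -ball_normE /= => uy.
apply: (homothetic_ball_sub Gw l0 l1).
have := ler_distD u y (l *: w); rewrite (distrC u y) in uy; lra.
Qed.

End convex_body.

Lemma boundary_dist_bound (R : realType) (V : completeNormedModType R)
  (ip : hilbert_inner V) (G : set V) (eps K : R) (u w : V) :
  convex_set (G : set (convex_lmodType V)) -> 0 < eps -> rball eps `<=` G ->
  G w -> `|w| <= K -> ~ interior G u -> `|u| <= `|w| -> 0 < cosv ip u w ->
  `|u - w| ^+ 2 <=
    K ^+ 2 * (K ^+ 2 / eps ^+ 2 + 1) * ((1 - cosv ip u w ^+ 2) / cosv ip u w ^+ 2).
Proof.
move=> convexG eps0 ballG Gw wK nu uw cos_gt0.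
set t := cosv ip u w in cos_gt0 *.
have u0 : 0 < `|u| by exact: cosv_gt0_norml cos_gt0.
have w0 : 0 < `|w| by exact: lt_le_trans uw.
have t1 : t <= 1.
  by rewrite -(@expr_le1 _ 2) ?(ltW cos_gt0) //; exact: sqr_cosv_le1.
pose l := t * `|u| / `|w|.
have l0 : 0 <= l := divr_ge0 (mulr_ge0 (ltW cos_gt0) (normr_ge0 u)) (normr_ge0 w).
have l1 : l <= 1.
  by rewrite /l ler_pdivrMr // mul1r (le_trans _ uw) // ler_piMl.
have proj_ge : (1 - l) ^+ 2 * eps ^+ 2 <= `|u| ^+ 2 * (1 - t ^+ 2).
  rewrite -exprMn -normB_proj_sqr // -/t -/l lerXn2r ?nnegrE //.
    by rewrite mulr_ge0 ?subr_ge0 // ltW.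
  exact (not_interior_dist_ge convexG ballG Gw l0 l1 nu).
rewrite -[w]scale1r (normB_scale_sqr ip) inner_cosv // mulr1 expr1n mul1r -/t.
exact: law_of_cosines_bound.
Qed.

Theorem lemma4p4 (R : realType) (V : completeNormedModType R) (ip : hilbert_inner V)
  (G : set V) (eps K : R) (u w : V) (theta : R) :
  closed G -> convex_set (G : set (convex_lmodType V)) ->
  0 < eps -> 0 < K ->
  rball eps `<=` G -> G `<=` rball K ->
  boundary G u -> boundary G w ->
  cosv ip u w = theta -> 0 < theta ->
  `|u - w| ^+ 2 <= K ^+ 2 * (K ^+ 2 / eps ^+ 2 + 1) * ((1 - theta ^+ 2) / theta ^+ 2).
Proof.
move=> closedG convexG eps0 _ ballG GK [cu nu] [cw nw] <- cos_gt0.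
rewrite -(closure_id G).1 // in cu cw.
have [uw|wu] := leP `|u| `|w|.
  exact: boundary_dist_bound convexG eps0 ballG cw (GK _ cw) nu uw cos_gt0.
rewrite distrC cosvC; rewrite cosvC in cos_gt0.
exact: boundary_dist_bound convexG eps0 ballG cu (GK _ cu) nw (ltW wu) cos_gt0.
Qed.
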